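(* Let $\mathcal{R}=(\Sigma,V,\geq_s,\Delta)$ be the term rewriting system described in the context. For every term $\tau\in T[\Sigma,V]$ in normal form (i.e. no rule of $\Delta$ is applicable to any subterm occurrence of $\tau$), $\tau$ is a polynomial $m_1\oplus\cdots\oplus m_k$ such that (1) $m_i>_p m_{i+1}$ for all $i\in[1,k-1]$, and (2) for every monomial $m_i=\alpha_1\cdots\alpha_h$, $\alpha_j\geq_l\alpha_{j+1}$ for all $j\in[1,h-1]$.
   Context: $\mathbb{F}=\mathbb{GF}(2^n)$. Signature $\Sigma=\mathbb{F}\cup\{\oplus,\otimes,f_1,\dots,f_t\}$: elements of $\mathbb{F}$ are constants, $\oplus,\otimes$ binary (field addition and multiplication), $f_1,\dots,f_t$ unary symbols for affine transformations, each $f$ having an associated affine constant $c_f\in\mathbb{F}$ (meaning $f(x\oplus y)=f(x)\oplus f(y)\oplus c_f$ for all $x,y$). $V$ is a set of variables, $\Sigma\cap V=\emptyset$, and $\geq_s$ is a total order on $V\uplus\Sigma$. Terms $T[\Sigma,V]$: smallest set containing $\mathbb{F}\cup V$ and closed under $\oplus$, $\otimes$, $f_j$; $T_{\backslash\oplus}(\Sigma,V)$ = terms not using $\oplus$. A factor is a term in $\mathbb{F}\cup V$ or of the form $f_i(\tau')$ with $\tau'\in T_{\backslash\oplus}(\Sigma,V)$; a monomial is a product $\alpha_1\otimes\cdots\otimes\alpha_k$ ($k\ge1$) of nonzero factors; a polynomial is a sum $m_1\oplus\cdots\oplus m_k$ of monomials (sums and products are treated as flat sequences). Factor order $\geq_l$: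 $\alpha\geq_l\alpha'$ iff (i) $\alpha,\alpha'\in\mathbb{F}\cup V$ and $\alpha\geq_s\alpha'$; or (ii) $\alpha=f(\tau)$, $\alpha'=f'(\tau')$ with $f\geq_s f'$, or $f=f'$ and $\tau\geq_p\tau'$; or (iii) $\alpha=f(\tau)$ and $f\geq_s\alpha'$, or $\alpha'=f(\tau)$ and $\alpha\geq_s f$. Monomial order $\geq_p$: lexicographic comparison (w.r.t. $\geq_l$) of the factor sequences sorted in descending $\geq_l$-order; $m>_p m'$ means $m\geq_p m'$ and the sorted factor sequences differ. Rules $\Delta$ (with $\tau,\tau_1,\tau_2$ terms, $m_i$ monomials, $\alpha_i$ factors, $f$ an affine symbol with constant $c$): R1: $m_1\oplus\cdots\oplus m_k\mapsto m'_1\oplus\cdots\oplus m'_k$ where $(m'_1,\dots,m'_k)={\tt sort}_{\geq_p}(m_1,\dots,m_k)\neq(m_1,\dots,m_k)$; R2: $\alpha_1\cdots\alpha_k\mapsto\alpha'_1\cdots\alpha'_k$ where $(\alpha'_1,\dots,\alpha'_k)={\tt sort}_{\geq_l}(\alpha_1,\dots,\alpha_k)\neq(\alpha_1,\dots,\alpha_k)$; R3: $\tau\oplus\tau\mapsto0$; R4: $\tau\otimes0\mapsto0$; R5: $0\otimes\tau\mapsto0$; R6: $\tau\oplus0\mapsto\tau$; R7: $0\oplus\tau\mapsto\tau$; R8: $\tau\otimes1\mapsto\tau$; R9: $1\otimes\tau\mapsto\tau$; R10: $(\tau_1\oplus\tau_2)\otimes\tau\mapsto(\tau_1\otimes\tau)\oplus(\tau_2\otimes\tau)$;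 R11: $\tau\otimes(\tau_1\oplus\tau_2)\mapsto(\tau\otimes\tau_1)\oplus(\tau\otimes\tau_2)$; R12: $f(\tau_1\oplus\tau_2)\mapsto f(\tau_1)\oplus f(\tau_2)\oplus c$; R13: $f(0)\mapsto c$. A rewriting step replaces one occurrence of a subterm matching a left-hand side by the corresponding right-hand side. *)

From mathcomp Require Import all_boot all_order all_algebra.
From Stdlib Require List.


Set Implicit Arguments.
Unset Strict Implicit.
Unset Printing Implicit Defensive.

Section TRS.

(* F plays the role of GF(2^n) (the cardinality hypothesis is in the theorem),
   V is the set of variables, t the number of affine symbols f_1..f_t. *)
Variables (F : finFieldType) (V : Type) (t : nat).

Inductive term : Type :=
  | Cst of F
  | Var of V
  | Sum of seq term
  | Prod of seq term
  | App of 'I_t & term.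

(* The symbols of V |+| Sigma, on which the total order >=_s lives. *)
Inductive sym : Type :=
  | SVar of V | SCst of F | SPlus | STimes | SFun of 'I_t.

Definition is_sum (u : term) : bool := if u is Sum _ then true else false.
Definition is_prod (u : term) : bool := if u is Prod _ then true else false.

(* Well-formed (flat) terms of T[Sigma,V]: sums and products have at least two
   arguments, no argument of a sum is a sum, no argument of a product is a product. *)
Inductive wf : term -> Prop :=
  | wf_Cst c : wf (Cst c)
  | wf_Var v : wf (Var v)
  | wf_Sum l : 2 <= size l -> (forall a, List.In a l -> wf a /\ ~~ is_sum a) -> wf (Sum l)
  | wf_Prod l : 2 <= size l -> (forall a, List.In a l -> wf a /\ ~~ is_prod a) -> wf (Prod l)
  | wf_App f a : wf a -> wf (App f a).

Definition sumlist (u : term) : seq term := if u is Sum l then l else [:: u].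
Definition prodlist (u : term) : seq term := if u is Prod l then l else [:: u].
Definition mksum (a b : term) : term := Sum (sumlist a ++ sumlist b).
Definition mkprod (a b : term) : term := Prod (prodlist a ++ prodlist b).

Fixpoint no_plus (u : term) : bool :=
  match u with
  | Cst _ | Var _ => true
  | Sum _ => false
  | Prod l => all no_plus l
  | App _ a => no_plus a
  end.

Definition is_factor (u : term) : bool :=
  match u with
  | Cst _ | Var _ => true
  | App _ a => no_plus a
  | _ => false
  end.

Definition is_zero (u : term) : bool := if u is Cst c then c == 0%R else false.

Definition is_monomial (u : term) : bool :=
  match u with
  | Prod l => (0 < size l) && all (fun a => is_factor a && ~~ is_zero a) l
  | _ => is_factor u && ~~ is_zero u
  end.

Definition factors (m : term) : seq term := prodlist m.

(* Depth of a term, used as fuel for the (well-founded) mutual recursion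
   between >=_l and >=_p. *)
Fixpoint depth (u : term) : nat :=
  match u with
  | Cst _ | Var _ => 0
  | Sum l | Prod l => (foldr (fun a m => maxn (depth a) m) 0 l).+1
  | App _ a => (depth a).+1
  end.

Fixpoint lexge (r : rel term) (s s' : seq term) : bool :=
  match s, s' with
  | _, [::] => true
  | [::], _ :: _ => false
  | a :: s1, b :: s2 =>
      (r a b && ~~ r b a) || (r a b && r b a && lexge r s1 s2)
  end.

Variable ges : rel sym.

Definition atom_sym (u : term) : option sym :=
  match u with
  | Cst c => Some (SCst c)
  | Var v => Some (SVar v)
  | _ => None
  end.

Fixpoint gel_fuel (k : nat) (a b : term) : bool :=
  match k with
  | 0 => false
  | k'.+1 =>
    match a, b with
    | App f x, App f' y =>
        (ges (SFun f) (SFun f') && (f != f'))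
        || ((f == f') &&
            lexge (gel_fuel k') (sort (gel_fuel k') (factors x))
                                (sort (gel_fuel k') (factors y)))
    | App f _, _ =>
        if atom_sym b is Some sb then ges (SFun f) sb else false
    | _, App f' _ =>
        if atom_sym a is Some sa then ges sa (SFun f') else false
    | _, _ =>
        match atom_sym a, atom_sym b with
        | Some sa, Some sb => ges sa sb
        | _, _ => false
        end
    end
  end.

Definition gel (a b : term) : bool := gel_fuel (maxn (depth a) (depth b)).+1 a b.

Definition gep (m m' : term) : bool :=
  lexge gel (sort gel (factors m)) (sort gel (factors m')).

Definition gtp (m m' : term) : Prop :=
  gep m m' /\ sort gel (factors m) <> sort gel (factors m').

Variable cf : 'I_t -> F.

Definition zero : term := Cst 0%R.
Definition one : term := Cst 1%R.

Inductive rule_step : term -> term -> Prop :=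
  | R1 ms : all is_monomial ms -> 2 <= size ms -> sort gep ms <> ms ->
            rule_step (Sum ms) (Sum (sort gep ms))
  | R2 al : all is_factor al -> 2 <= size al -> sort gel al <> al ->
            rule_step (Prod al) (Prod (sort gel al))
  | R3 tau : rule_step (mksum tau tau) zero
  | R4 tau : rule_step (mkprod tau zero) zero
  | R5 tau : rule_step (mkprod zero tau) zero
  | R6 tau : rule_step (mksum tau zero) tau
  | R7 tau : rule_step (mksum zero tau) tau
  | R8 tau : rule_step (mkprod tau one) tau
  | R9 tau : rule_step (mkprod one tau) tau
  | R10 t1 t2 tau : rule_step (mkprod (mksum t1 t2) tau)
                              (mksum (mkprod t1 tau) (mkprod t2 tau))
  | R11 t1 t2 tau : rule_step (mkprod tau (mksum t1 t2))
                              (mksum (mkprod tau t1) (mkprod tau t2))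
  | R12 f t1 t2 : rule_step (App f (mksum t1 t2))
                            (mksum (mksum (App f t1) (App f t2)) (Cst (cf f)))
  | R13 f : rule_step (App f zero) (Cst (cf f)).

(* Subterm occurrences, modulo the flat (associative) representation:
   a contiguous segment (of length >= 2) of a sum / product is a subterm. *)
Inductive occ : term -> term -> Prop :=
  | occ_refl u : occ u u
  | occ_Sum s l1 a l2 : occ s a -> occ s (Sum (l1 ++ a :: l2))
  | occ_Prod s l1 a l2 : occ s a -> occ s (Prod (l1 ++ a :: l2))
  | occ_App s f a : occ s a -> occ s (App f a)
  | occ_Sum_seg l1 l2 l3 : 2 <= size l2 -> occ (Sum l2) (Sum (l1 ++ l2 ++ l3))
  | occ_Prod_seg l1 l2 l3 : 2 <= size l2 -> occ (Prod l2) (Prod (l1 ++ l2 ++ l3)).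

Definition normal_form (u : term) : Prop :=
  forall s, occ s u -> ~ exists r, rule_step s r.

Definition poly_of (ms : seq term) : term :=
  match ms with
  | [::] => zero
  | [:: m] => m
  | _ => Sum ms
  end.

End TRS.

From mathcomp Require Import all_boot all_order all_algebra.
From Stdlib Require List Classical.

Set Implicit Arguments.
Unset Strict Implicit.
Unset Printing Implicit Defensive.

(* R4-R7 forbid zero summands and zero
   factors, R10-R12 forbid a sum below a product or an affine symbol and R13
   forbids f(0), so a normal form is 0, a monomial or a flat sum of monomials.
   As R1 and R2 do not apply, its summands and factors are left unchanged by
   sort; since >=_l and >=_p are total on well-formed factors and monomials
   (this needs only the totality of >=_s), sort returns sorted lists, so they
   are sorted.  The order of summands is strict because of R3: two adjacent
   summands with the same sorted factor sequence would be equal. *)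

Lemma In_mem (T : eqType) (x : T) s : List.In x s -> x \in s.
Proof. by elim: s => [|y s IHs] //= [->|/IHs x_s]; rewrite inE ?eqxx ?x_s ?orbT. Qed.

Section SeqFacts.

Variable T : Type.
Implicit Types (s : seq T) (r : rel T).

Lemma all_InP (p : pred T) s : reflect (forall x, List.In x s -> p x) (all p s).
Proof.
elim: s => [|y s IHs] /=; first by left.
apply: (iffP andP) => [[py /IHs ps] x [<-|/ps]//|ps].
by split; [apply: ps; left | apply/IHs => x x_s; apply: ps; right].
Qed.

Lemma In_nth x0 s i : i < size s -> List.In (nth x0 s i) s.
Proof. by elim: s i => [|y s IHs] [|i] //= lt_i; [left | right; apply: IHs]. Qed.

Lemma In_sort r x s : List.In x (sort r s) -> List.In x s.
Proof.
case: s => [|x0 s] //; rewrite -[in sort _ _](mkseq_nth x0 (x0 :: s)) sort_map.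
case/List.in_map_iff=> i [<- /In_mem]; rewrite mem_sort mem_iota => lt_i.
exact: In_nth.
Qed.

Lemma sort_sorted_on r (P : T -> Prop) s :
  (forall a b, P a -> P b -> r a b || r b a) ->
  (forall a, List.In a s -> P a) -> sorted r (sort r s).
Proof.
case: s => [|x0 s] // r_total Ps.
rewrite -(mkseq_nth x0 (x0 :: s)) sort_map sorted_map.
apply: (sort_sorted_in (P := fun i => i < size (x0 :: s))); last first.
  by apply/allP => i; rewrite mem_iota.
by move=> i j lt_i lt_j; apply: r_total; apply: Ps; apply: In_nth.
Qed.

Definition adjacent (a b : T) s := exists l1 l2, s = l1 ++ [:: a; b] ++ l2.

Lemma adjacent_In a b s : adjacent a b s -> List.In a s /\ List.In b s.
Proof.
case=> l1 [l2 ->]; split; apply/List.in_or_app; right; [left | right; left] => //.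
Qed.

Lemma adjacent_nth x0 s i :
  i.+1 < size s -> adjacent (nth x0 s i) (nth x0 s i.+1) s.
Proof.
move=> lt_i; exists (take i s), (drop i.+2 s).
by rewrite /= -(drop_nth x0 lt_i) -drop_nth ?cat_take_drop // ltnW.
Qed.

Lemma In_adjacent a s : 2 <= size s -> List.In a s ->
  exists2 b, List.In b s & adjacent a b s \/ adjacent b a s.
Proof.
elim: s => [|x s IHs] //= size_s [<-|a_s].
  case: s size_s {IHs} => [|y s] // _.
  by exists y; [right; left | left; exists [::], s].
case: s size_s IHs a_s => [|y s] // _ IHs a_s.
case: s IHs a_s => [|z s] IHs a_s.
  by case: a_s => // <-; exists x; [left | right; exists [::], [::]].
have [b b_s adj] := IHs isT a_s; exists b; first by right.
by case: adj => [] [l1 [l2 ->]]; [left | right]; exists (x :: l1), l2.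
Qed.

End SeqFacts.

(* Maximal implicits: otherwise the view [/In_sort] instantiates [x] with the
   view subject itself, as [T] is an arbitrary type. *)
Arguments In_sort {T r x s}.

Section Terms.

Variables (F : finFieldType) (V : Type) (t : nat).
Local Notation term := (term F V t).
Local Notation zero := (zero F V t).
Implicit Types (u a b m : term) (l ms : seq term).

Lemma depth_In a l :
  List.In a l -> depth a <= foldr (fun b n => maxn (depth b) n) 0 l.
Proof.
elim: l => [|b l IHl] //= [<-|/IHl a_l]; first exact: leq_maxl.
exact: leq_trans a_l (leq_maxr _ _).
Qed.

Lemma term_In_ind (P : term -> Prop) :
  (forall c, P (Cst V t c)) -> (forall v, P (Var F t v)) ->
  (forall l, (forall a, List.In a l -> P a) -> P (Sum l)) ->
  (forall l, (forall a, List.In a l -> P a) -> P (Prod l)) ->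
  (forall f a, P a -> P (App f a)) ->
  forall u, P u.
Proof.
move=> PCst PVar PSum PProd PApp u.
elim: (depth u).+1 {-2}u (ltnSn (depth u)) => {u} // k IHk.
case=> [c|v|l|l|f a] //= lt_u; [apply: PSum | apply: PProd | apply/PApp/IHk] => //;
  by move=> a a_l; apply/IHk/(leq_ltn_trans (depth_In a_l)).
Qed.

Lemma wf_Sum_inv l :
  wf (Sum l) -> 2 <= size l /\ forall a, List.In a l -> wf a /\ ~~ is_sum a.
Proof. by move=> wf_l; inversion wf_l. Qed.

Lemma wf_Prod_inv l :
  wf (Prod l) -> 2 <= size l /\ forall a, List.In a l -> wf a /\ ~~ is_prod a.
Proof. by move=> wf_l; inversion wf_l. Qed.

Lemma wf_App_inv f a : wf (App f a) -> wf a.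
Proof. by move=> wf_a; inversion wf_a. Qed.

Lemma mksum_nonsum a b : ~~ is_sum a -> ~~ is_sum b -> mksum a b = Sum [:: a; b].
Proof. by case: a; case: b. Qed.

Lemma mkprod_nonprod a b : ~~ is_prod a -> ~~ is_prod b -> mkprod a b = Prod [:: a; b].
Proof. by case: a; case: b. Qed.

Lemma wf_Sum_mksum a l : wf (Sum (a :: l)) -> Sum (a :: l) = mksum a (poly_of l).
Proof.
case/wf_Sum_inv=> size_l wf_l.
have sumlistE x : List.In x (a :: l) -> sumlist x = [:: x].
  by case/wf_l=> _; case: x.
rewrite /mksum sumlistE /=; last by left.
by case: l {wf_l} size_l sumlistE => [|b [|c l]] //= _ ->; last by right; left.
Qed.

Lemma monomialE u : ~~ is_prod u -> is_monomial u = is_factor u && ~~ is_zero u.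
Proof. by case: u. Qed.

Lemma monomial_no_plus u : is_monomial u -> no_plus u.
Proof.
case: u => //= [l /andP[_ /all_InP factors_l]|f a]; last by rewrite andbT.
by apply/all_InP => a /factors_l; case: a => //= f a /andP[].
Qed.

Definition is_polynomial u : Prop :=
  exists2 ms, u = poly_of ms & all (@is_monomial F V t) ms.

Lemma polynomial_monomial u :
  is_polynomial u -> u <> zero -> ~~ is_sum u -> is_monomial u.
Proof. by case=> [[|m [|m' ms]]] -> //= /andP[]. Qed.

Lemma poly_of_Sum ms : 2 <= size ms -> poly_of ms = Sum ms.
Proof. by case: ms => [|m [|m' ms]]. Qed.

Lemma lexge_total (r : rel term) (P : term -> Prop) s s' :
  (forall a b, P a -> P b -> r a b || r b a) ->
  (forall a, List.In a s -> P a) -> (forall a, List.In a s' -> P a) ->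
  lexge r s s' || lexge r s' s.
Proof.
move=> r_total; elim: s s' => [|a s IHs] [|b s'] //= Ps Ps'.
have := r_total a b (Ps a (or_introl erefl)) (Ps' b (or_introl erefl)).
case: (r a b); case: (r b a) => //= _.
by apply: IHs => x x_s; [apply: Ps | apply: Ps']; right.
Qed.

Lemma no_plus_factors u a : wf u -> no_plus u -> List.In a (factors u) ->
  [/\ wf a, is_factor a & depth a <= depth u].
Proof.
case: u => [c|v|l|l|f x] wf_u np_u //=; try by case=> // <-.
move=> a_l; have [wf_a a_np] := (wf_Prod_inv wf_u).2 a a_l.
move/all_InP: np_u => /(_ a a_l) np_a.
split=> //; first by case: a {wf_a a_l} a_np np_a.
exact: leq_trans (depth_In a_l) (leqnSn _).
Qed.

Lemma monomial_factors m a : wf m -> is_monomial m -> List.In a (factors m) ->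
  wf a /\ is_factor a.
Proof.
case: m => [c|v|l|l|f x] wf_m mono_m /=; try by case=> // <-; case/andP: mono_m.
move=> a_l; split; first exact: ((wf_Prod_inv wf_m).2 a a_l).1.
by case/andP: mono_m => _ /all_InP/(_ a a_l)/andP[].
Qed.

Lemma factors_inj u u' : wf u -> wf u' -> factors u = factors u' -> u = u'.
Proof.
have factors1 (w : term) : ~~ is_prod w -> factors w = [:: w] by case: w.
have size_factors (w : term) : wf w -> (1 < size (factors w)) = is_prod w.
  by case: w => // l; case/wf_Prod_inv => ->.
move=> wf_u wf_u' eq_fs; move: (size_factors u wf_u).
rewrite eq_fs size_factors //.
case: (boolP (is_prod u')) => [pu' pu | npu' /esym/negbT npu].
  by case: u {wf_u} pu eq_fs => // l _; case: u' {wf_u'} pu' => // l' _ /= ->.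
by move: eq_fs; rewrite !factors1 // => -[].
Qed.

Section NormalForms.

Variables (ges : rel (sym F V t)) (cf : 'I_t -> F).
Local Notation normal := (normal_form ges cf).
Local Notation stuck u := (~ exists r, rule_step ges cf u r).

Lemma normal_stuck u : normal u -> stuck u.
Proof. exact: (fun nf => nf u (occ_refl u)). Qed.

Lemma normal_Sum_In l a : normal (Sum l) -> List.In a l -> normal a.
Proof.
move=> nf /(List.in_split a l)[l1 [l2 l_eq]] s s_a.
by apply: nf; rewrite l_eq; apply: occ_Sum.
Qed.

Lemma normal_Prod_In l a : normal (Prod l) -> List.In a l -> normal a.
Proof.
move=> nf /(List.in_split a l)[l1 [l2 l_eq]] s s_a.
by apply: nf; rewrite l_eq; apply: occ_Prod.
Qed.

Lemma normal_App f a : normal (App f a) -> normal a.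
Proof. by move=> nf s s_a; apply: nf; apply: occ_App. Qed.

Lemma normal_Sum_adjacent l a b :
  normal (Sum l) -> adjacent a b l -> stuck (Sum [:: a; b]).
Proof. by move=> nf [l1 [l2 l_eq]]; apply: nf; rewrite l_eq; apply: occ_Sum_seg. Qed.

Lemma normal_Prod_adjacent l a b :
  normal (Prod l) -> adjacent a b l -> stuck (Prod [:: a; b]).
Proof. by move=> nf [l1 [l2 l_eq]]; apply: nf; rewrite l_eq; apply: occ_Prod_seg. Qed.

Lemma normal_Sum_nonzero l a :
  wf (Sum l) -> normal (Sum l) -> List.In a l -> a <> zero.
Proof.
case/wf_Sum_inv=> size_l wf_l nf a_l a0; subst a.
have [b b_l adj] := In_adjacent size_l a_l; have [_ b_ns] := wf_l b b_l.
case: adj => /(normal_Sum_adjacent nf); apply; exists b;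
  rewrite -mksum_nonsum //; [exact: R7 | exact: R6].
Qed.

Lemma normal_Prod_nonzero l a :
  wf (Prod l) -> normal (Prod l) -> List.In a l -> a <> zero.
Proof.
case/wf_Prod_inv=> size_l wf_l nf a_l a0; subst a.
have [b b_l adj] := In_adjacent size_l a_l; have [_ b_np] := wf_l b b_l.
case: adj => /(normal_Prod_adjacent nf); apply; exists zero;
  rewrite -mkprod_nonprod //; [exact: R5 | exact: R4].
Qed.

Lemma normal_Prod_nonsum l a :
  wf (Prod l) -> normal (Prod l) -> List.In a l -> ~~ is_sum a.
Proof.
case/wf_Prod_inv=> size_l wf_l nf a_l; have [wf_a _] := wf_l a a_l.
have [b b_l adj] := In_adjacent size_l a_l; have [_ b_np] := wf_l b b_l.
case: a wf_a {a_l} adj => // [[|a1 l1]] wf_a; first by have [] := wf_Sum_inv wf_a.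
rewrite (wf_Sum_mksum wf_a); case=> /(normal_Prod_adjacent nf) []; eexists;
  rewrite -mkprod_nonprod //; [exact: R10 | exact: R11].
Qed.

Lemma normal_App_nonzero f a : normal (App f a) -> a <> zero.
Proof.
move=> /normal_stuck nf a0; apply: nf.
by exists (Cst V t (cf f)); rewrite a0; apply: R13.
Qed.

Lemma normal_App_nonsum f a : wf a -> normal (App f a) -> ~~ is_sum a.
Proof.
case: a => // [[|a1 l1]] wf_a /normal_stuck nf; first by have [] := wf_Sum_inv wf_a.
by exfalso; apply: nf; eexists; rewrite (wf_Sum_mksum wf_a); apply: R12.
Qed.

Lemma normal_polynomial u : wf u -> normal u -> is_polynomial u.
Proof.
elim/term_In_ind: u => [c|v|l IHl|l IHl|f a IHa] wf_u nf_u.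
- have [->|c0] := eqVneq c 0%R; first by exists [::].
  by exists [:: Cst V t c]; rewrite //= c0.
- by exists [:: Var F t v].
- have [size_l wf_l] := wf_Sum_inv wf_u.
  exists l; first by rewrite poly_of_Sum.
  apply/all_InP => a a_l; have [wf_a a_ns] := wf_l a a_l.
  apply: polynomial_monomial a_ns; first exact: IHl (normal_Sum_In nf_u a_l).
  exact: normal_Sum_nonzero a_l.
- have [size_l wf_l] := wf_Prod_inv wf_u.
  exists [:: Prod l]; rewrite //= andbT ltnW //.
  apply/all_InP => a a_l; have [wf_a a_np] := wf_l a a_l.
  rewrite -monomialE //.
  apply: polynomial_monomial (normal_Prod_nonsum wf_u nf_u a_l).
    exact: IHl (normal_Prod_In nf_u a_l).
  exact: normal_Prod_nonzero a_l.
- have wf_a := wf_App_inv wf_u; exists [:: App f a]; rewrite //= !andbT.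
  apply/monomial_no_plus/polynomial_monomial; first exact: IHa (normal_App nf_u).
    exact: normal_App_nonzero nf_u.
  exact: normal_App_nonsum nf_u.
Qed.

Lemma normal_poly_summand ms m :
  wf (poly_of ms) -> normal (poly_of ms) -> List.In m ms -> wf m /\ normal m.
Proof.
case: ms => [|m1 [|m2 ms]] //= wf_p nf_p m_ms; first by case: m_ms => // <-.
by split; [exact: ((wf_Sum_inv wf_p).2 m m_ms).1 | exact: normal_Sum_In nf_p m_ms].
Qed.

Hypothesis ges_total : forall x y, ges x y || ges y x.

Lemma gel_fuel_total k a b : wf a -> is_factor a -> wf b -> is_factor b ->
  depth a < k -> depth b < k -> gel_fuel ges k a b || gel_fuel ges k b a.
Proof.
elim: k a b => [|k IHk] // a b.
case: a => [c|v|l|l|f x]; case: b => [c'|v'|l'|l'|g y] //=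
  wf_a fa wf_b fb lt_a lt_b; try exact: ges_total.
have [<-|neq_fg] := eqVneq f g; last by rewrite !andbT !orbF; apply: ges_total.
rewrite !andbF /=.
apply: (lexge_total (P := fun z : term => [/\ wf z, is_factor z & depth z < k])).
- by move=> a b [wf_a' fa' lt_a'] [wf_b' fb' lt_b']; apply: IHk.
- move=> z /In_sort z_x.
  have [wf_z fz le_z] := no_plus_factors (wf_App_inv wf_a) fa z_x.
  by split=> //; apply: leq_ltn_trans le_z lt_a.
- move=> z /In_sort z_y.
  have [wf_z fz le_z] := no_plus_factors (wf_App_inv wf_b) fb z_y.
  by split=> //; apply: leq_ltn_trans le_z lt_b.
Qed.

Lemma gel_total a b : wf a -> is_factor a -> wf b -> is_factor b ->
  gel ges a b || gel ges b a.
Proof.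
move=> wf_a fa wf_b fb; rewrite /gel (maxnC (depth b)).
by apply: gel_fuel_total; rewrite // ltnS ?leq_maxl ?leq_maxr.
Qed.

Lemma gep_total m m' : wf m -> is_monomial m -> wf m' -> is_monomial m' ->
  gep ges m m' || gep ges m' m.
Proof.
move=> wf_m mono_m wf_m' mono_m'.
apply: (lexge_total (P := fun a : term => wf a /\ is_factor a)).
- by move=> a b [wf_a fa] [wf_b fb]; apply: gel_total.
- by move=> a /In_sort; apply: monomial_factors.
- by move=> a /In_sort; apply: monomial_factors.
Qed.

(* [term] has no decidable equality ([V] is an arbitrary type), so the
   failure of R1 and R2 is turned into [sort _ s = s] classically. *)
Lemma normal_sort_factors m :
  wf m -> is_monomial m -> normal m -> sort (gel ges) (factors m) = factors m.
Proof.
case: m => // l wf_m /andP[_ /all_InP factors_l] /normal_stuck nf.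
apply: Classical_Prop.NNPP => unsorted; apply: nf.
exists (Prod (sort (gel ges) l)); apply: R2 => //; last exact: (wf_Prod_inv wf_m).1.
by apply/all_InP => a /factors_l /andP[].
Qed.

Lemma normal_factors_sorted m :
  wf m -> is_monomial m -> normal m -> sorted (gel ges) (factors m).
Proof.
move=> wf_m mono_m nf; rewrite -normal_sort_factors //.
apply: (sort_sorted_on (P := fun a : term => wf a /\ is_factor a)).
  by move=> a b [wf_a fa] [wf_b fb]; apply: gel_total.
by move=> a; apply: monomial_factors.
Qed.

Lemma normal_Sum_sorted l :
  wf (Sum l) -> all (@is_monomial F V t) l -> normal (Sum l) -> sorted (gep ges) l.
Proof.
move=> wf_l /all_InP mono_l /normal_stuck nf.
have [size_l wf_summands] := wf_Sum_inv wf_l.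
have sort_l : sort (gep ges) l = l.
  apply: Classical_Prop.NNPP => unsorted; apply: nf.
  by exists (Sum (sort (gep ges) l)); apply: R1 => //; apply/all_InP.
rewrite -{1}sort_l.
apply: (sort_sorted_on (P := fun m : term => wf m /\ is_monomial m)).
  by move=> m m' [wf_m mono_m] [wf_m' mono_m']; apply: gep_total.
by move=> m m_l; split; [exact: (wf_summands m m_l).1 | exact: mono_l].
Qed.

Lemma normal_Sum_gtp l :
  wf (Sum l) -> all (@is_monomial F V t) l -> normal (Sum l) ->
  forall i, i.+1 < size l -> gtp ges (nth zero l i) (nth zero l i.+1).
Proof.
move=> wf_l mono_l nf i lt_i; split.
  by move/(sortedP zero): (normal_Sum_sorted wf_l mono_l nf); apply.
have adj := adjacent_nth zero lt_i; have [m_l m'_l] := adjacent_In adj.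
have [_ wf_summands] := wf_Sum_inv wf_l; move/all_InP: mono_l => mono_l.
have [[wf_m m_ns] [wf_m' _]] := (wf_summands _ m_l, wf_summands _ m'_l).
rewrite !normal_sort_factors ?mono_l //;
  [|exact: normal_Sum_In nf m'_l | exact: normal_Sum_In nf m_l].
move/(factors_inj wf_m wf_m') => eq_mm'.
apply: (normal_Sum_adjacent nf adj); exists zero.
by rewrite -eq_mm' -mksum_nonsum //; apply: R3.
Qed.

End NormalForms.

End Terms.

Theorem lemma1 (n : nat) (F : finFieldType) (HF : #|F| = 2 ^ n)
  (V : Type) (t : nat) (ges : rel (sym F V t))
  (ges_refl : forall x, ges x x)
  (ges_antisym : forall x y, ges x y -> ges y x -> x = y)
  (ges_trans : forall x y z, ges x y -> ges y z -> ges x z)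
  (ges_total : forall x y, ges x y || ges y x)
  (cf : 'I_t -> F)
  (tau : term F V t) :
  wf tau ->
  normal_form ges cf tau ->
  exists ms : seq (term F V t),
    [/\ tau = poly_of ms,
        all (@is_monomial F V t) ms,
        (forall i, i.+1 < size ms ->
           gtp ges (nth (zero F V t) ms i) (nth (zero F V t) ms i.+1))
      & (forall m, List.In m ms ->
           forall j, j.+1 < size (factors m) ->
             gel ges (nth (zero F V t) (factors m) j)
                     (nth (zero F V t) (factors m) j.+1))].
Proof.
move=> wf_tau nf_tau; have [ms tau_ms mono_ms] := normal_polynomial wf_tau nf_tau.
subst tau; exists ms; split=> // [i lt_i | m m_ms].
  have size_ms : 2 <= size ms := leq_ltn_trans (ltn0Sn i) lt_i.
  rewrite poly_of_Sum // in wf_tau nf_tau.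
  exact: (normal_Sum_gtp ges_total wf_tau mono_ms nf_tau lt_i).
have [wf_m nf_m] := normal_poly_summand wf_tau nf_tau m_ms.
have mono_m : is_monomial m by move/all_InP: mono_ms; apply.
by move/(sortedP (zero F V t)): (normal_factors_sorted ges_total wf_m mono_m nf_m).
Qed.
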